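(* Let $q$ be a prime power and $n$ a positive integer with $\gcd(q,n)=1$. Iso-self-dual cyclic codes over $\mathbb{F}_q$ of length $n$ exist if and only if $0<\nu_2(n)<2\,\nu_2(q-1)$.
   Context: $R_n=\mathbb{F}_q[X]/\langle X^n-1\rangle$; each element is identified with its unique representative $a_0+a_1X+\dots+a_{n-1}X^{n-1}$ and with the word $(a_0,\dots,a_{n-1})\in\mathbb{F}_q^n$. A cyclic code of length $n$ is an ideal of $R_n$; $C^\perp$ is the Euclidean dual of $C$ in $\mathbb{F}_q^n$. Fix a primitive $n$-th root of unity $\theta$ in an extension field of $\mathbb{F}_q$. For $s\in\mathbb{Z}_n^*$ (unit group of $\mathbb{Z}/n\mathbb{Z}$) and $t\in\mathbb{Z}_n$ with $qt\equiv t\pmod n$ (so $\theta^t\in\mathbb{F}_q$), let $\varphi_{s,t}:R_n\to R_n$, $a(X)\mapsto a(\theta^{-t}X^{s^{-1}})\bmod (X^n-1)$, where $s^{-1}$ is a positive integer with $ss^{-1}\equiv1\pmod n$. A cyclic code $C\subseteq R_n$ is iso-self-dual if there exist such $s,t$ with $\varphi_{s,t}(C)=C^\perp$. For a nonzero integer $m$, $\nu_2(m)$ is the exponent of the largest power of $2$ dividing $m$; $\nu_2(0)=\infty$. *)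

From HB Require Import structures.
From mathcomp Require Import all_boot all_order all_algebra all_field.
Set Implicit Arguments. Unset Strict Implicit. Unset Printing Implicit Defensive.
Import GRing.Theory.
Local Open Scope ring_scope.

Section Codes.
Variable F : fieldType.

(* Elements of R_n = F[X]/<X^n-1> are identified with their unique
   representatives: polynomials of size <= n (degree < n).
   A code is a set (predicate) of such representatives. *)

Definition is_cyclic_code (n : nat) (C : {poly F} -> Prop) : Prop :=
  [/\ (forall p, C p -> (size p <= n)%N),
      C 0,
      (forall p r, C p -> C r -> C (p + r))
    & (forall a p, C p -> C ((a * p) %% ('X^n - 1)))].

(* Euclidean dual, words (a_0,...,a_{n-1}) <-> a_0 + ... + a_{n-1} X^{n-1}. *)
Definition dual_code (n : nat) (C : {poly F} -> Prop) : {poly F} -> Prop :=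
  fun v => (size v <= n)%N /\
           forall c, C c -> \sum_(i < n) v`_i * c`_i = 0.

Variable L : fieldType.
Variable iota : {rmorphism F -> L}.

(* phi_{s,t}(a) = a(theta^{-t} X^{s'}) mod (X^n - 1), with s' = s^{-1};
   computed in L[X] (theta lives in the extension L of F via iota). *)
Definition phi_st (theta : L) (n s' t : nat) (a : {poly F}) : {poly L} :=
  ((map_poly iota a) \Po ((theta ^+ t)^-1 *: 'X^s')) %% ('X^n - 1).

Definition iso_self_dual (q : nat) (theta : L) (n : nat) (C : {poly F} -> Prop) : Prop :=
  exists s t s' : nat,
    [/\ (s < n)%N /\ coprime s n, (t < n)%N /\ (q * t == t %[mod n])%N,
        (0 < s')%N /\ (s * s' == 1 %[mod n])%N &
        forall b : {poly L},
          (exists a, C a /\ phi_st theta n s' t a = b) <->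
          (exists a, dual_code n C a /\ map_poly iota a = b)].
End Codes.

Definition nu2 (m : nat) : nat := logn 2 m.

From HB Require Import structures.
From mathcomp Require Import all_boot all_order all_algebra all_field.
From mathcomp Require Import cyclic abelian zify ring.
From Stdlib Require Import ClassicalEpsilon.
Set Implicit Arguments. Unset Strict Implicit. Unset Printing Implicit Defensive.
Import GRing.Theory.

(* For a cyclic code C let Z(C) be its zero set {k : c(theta^k) = 0 for all c in C}
   (exponents modulo n, with j * (n - 1) standing for -j).  Zero sets are exactly the
   unions of q-cyclotomic cosets, Z(C^perp) = -(complement of Z(C)), and phi_{s,t}
   transports zero sets along k |-> s'k - t.  Hence iso-self-dual codes exist iff some
   affine map k |-> -s'k - t with qt = t swaps a union Z of cyclotomic cosets with its
   complement.
   If 0 < nu2(n) < 2 nu2(q-1), let c = max(nu2(n) - nu2(q-1), 0) and take s = s' = -1,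
   t = n / 2^(nu2(n) - c) and Z = {k : bit c of k is 1}: Z is q-invariant because
   q = 1 mod 2^(c+1), and k |-> k - t flips bit c because -t is an odd multiple of 2^c.
   Conversely, since Z is q-invariant, both k |-> uk - t and k |-> uqk - t (u = -s')
   swap Z with its complement; when the bound fails, one of them fixes a residue class
   modulo 2^nu2(n).  That class has an odd number n / 2^nu2(n) of elements and is
   permuted, so it cannot be split evenly between Z and its complement. *)

Local Open Scope nat_scope.

Lemma eq_modMl_coprime a m x y :
  coprime a m -> a * x = a * y %[mod m] -> x = y %[mod m].
Proof.
case: m => [|m] co_am eq_axy.
  by move: co_am eq_axy; rewrite /coprime gcdn0 => /eqP ->; rewrite !mul1n.
have phi_gt0 : 0 < totient m.+1 by rewrite totient_gt0.
have unmul z : z = a ^ (totient m.+1).-1 * (a * z) %[mod m.+1].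
  by rewrite mulnA -expnSr prednK // -modnMml Euler_exp_totient // modnMml mul1n.
by rewrite (unmul x) (unmul y) -modnMmr eq_axy modnMmr.
Qed.


Lemma coprime_of_mul_mod1 n s s' : s * s' = 1 %[mod n] -> coprime s' n.
Proof.
move=> ss'; have : coprime (s * s') n by rewrite -coprime_modl ss' coprime_modl coprime1n.
by rewrite coprimeMl => /andP [].
Qed.

Lemma mul_pred_pred_mod n k : 0 < n -> k * (n - 1) * (n - 1) = k %[mod n].
Proof.
case: n => [|[|n]] // _; first by rewrite !modn1.
have -> : k * (n.+2 - 1) * (n.+2 - 1) = k * n * n.+2 + k by rewrite !subSS subn0; nia.
by rewrite modnMDl.
Qed.

Lemma dvdn_predMD n i l : i < n -> l < n -> (n %| (n - 1) * i + l) = (l == i).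
Proof.
move=> lt_in lt_ln; rewrite /dvdn -[X in _ == X](mod0n n) -(eqn_modDr i) add0n.
have n_gt0 : 0 < n by case: n lt_in {lt_ln}.
have -> : (n - 1) * i + l + i = i * n + l by rewrite mulnBl mul1n addnAC subnK ?leq_pmull // mulnC.
by rewrite modnMDl !modn_small.
Qed.

Lemma affine_mod_invl n s s' t k :
  t <= n -> s * s' = 1 %[mod n] -> s' * ((t + k) * s) + (n - t) = k %[mod n].
Proof.
move=> le_tn ss'; rewrite (_ : s' * _ = s * s' * (t + k)); last by ring.
by rewrite -modnDml -modnMml ss' modnMml mul1n modnDml addnAC subnKC // modnDl.
Qed.

Lemma affine_mod_invr n s s' t j :
  t <= n -> s * s' = 1 %[mod n] -> (t + (s' * j + (n - t))) * s = j %[mod n].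
Proof.
move=> le_tn ss'; rewrite addnCA subnKC // mulnDl (_ : s' * j * s = s * s' * j); last by ring.
by rewrite [n * s]mulnC addnC modnMDl -modnMml ss' modnMml mul1n.
Qed.

Lemma card_mod_class n d r :
  d %| n -> r < d -> #|[set k : 'I_n | k %% d == r]| = n %/ d.
Proof.
move=> /dvdnP [m ->] lt_rd; have d_gt0 : 0 < d by case: d lt_rd.
rewrite mulnK // cardsE cardE /enum_mem size_filter -enumT /=.
rewrite (@eq_count _ _ (preim val (fun k => k %% d == r))) // -count_map val_enum_ord.
elim: m => [|m IHm] //; rewrite mulSn addnC iotaD count_cat IHm -addn1; congr (_ + _).
rewrite add0n -[m * d]addn0 iotaDl count_map (@eq_in_count _ _ (pred1 r)).
  by rewrite (count_uniq_mem _ (iota_uniq 0 d)) mem_iota add0n lt_rd.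
by move=> i; rewrite mem_iota add0n /= => lt_id; rewrite modnMDl modn_small.
Qed.

Lemma flip_card_even (T : finType) (S : {set T}) (Z : pred T) (f : T -> T) :
  injective f -> {in S, forall x, f x \in S} -> (forall x, Z (f x) = ~~ Z x) ->
  ~~ odd #|S|.
Proof.
move=> f_inj fS fZ; pose SZ := [set x | Z x].
have f_in (A B : {set T}) : {in A, forall x, f x \in B} -> #|A| <= #|B|.
  move=> fAB; rewrite -(card_imset _ f_inj).
  by apply/subset_leq_card/subsetP => _ /imsetP [x /fAB ? ->].
have le1 : #|S :&: SZ| <= #|S :\: SZ|.
  by apply: f_in => x; rewrite !inE fZ => /andP [xS ->]; rewrite fS.
have le2 : #|S :\: SZ| <= #|S :&: SZ|.
  by apply: f_in => x; rewrite !inE fZ => /andP [-> xS]; rewrite fS.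
by rewrite -(cardsID SZ S) (@anti_leq #|S :&: SZ| _ (introT andP (conj le1 le2))) addnn odd_double.
Qed.

Definition cyclotomic_closed n q (Z : pred nat) :=
  (forall k, Z k = Z (k %% n)) /\ (forall k, Z (q * k) = Z k).

Lemma no_affine_flip n d w c x (Z : pred nat) :
  d %| n -> odd (n %/ d) -> coprime w n -> (forall k, Z k = Z (k %% n)) ->
  w * x + c = x %[mod d] -> ~ (forall k, Z (w * k + c) = ~~ Z k).
Proof.
move=> dvd_dn odd_nd co_wn Zmod fix_x flip.
have n_gt0 : 0 < n by case: (n) odd_nd; rewrite ?div0n.
have d_gt0 : 0 < d := dvdn_gt0 n_gt0 dvd_dn.
pose f (k : 'I_n) : 'I_n := Ordinal (ltn_pmod (w * k + c) n_gt0).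
have f_inj : injective f.
  move=> k1 k2 /(congr1 val) /eqP; rewrite eqn_modDr => /eqP /(eq_modMl_coprime co_wn).
  by rewrite !modn_small // => /val_inj.
suff : ~~ odd (n %/ d) by rewrite odd_nd.
rewrite -(@card_mod_class _ _ (x %% d) dvd_dn) ?ltn_pmod //.
apply: (@flip_card_even _ _ (fun k : 'I_n => Z k) _ f_inj) => k /=; last first.
  by rewrite -Zmod flip.
rewrite !inE /= modn_dvdm // => /eqP class_k.
by rewrite -modnDml -modnMmr class_k modnMmr modnDml fix_x.
Qed.

Lemma pow2_not_dvd_choice u q c :
  odd u -> 1 < q -> logn 2 (q - 1) <= c ->
  exists2 w, w = u \/ w = u * q & ~~ (2 ^ c.+1 %| w - 1).
Proof.
move=> odd_u q_gt1 le_bc; set b := logn 2 (q - 1) in le_bc.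
have [dvd_u | ] := boolP (2 ^ c.+1 %| u - 1); last by exists u; [left |].
exists (u * q); [by right | apply/negP => dvd_uq].
have u_gt0 : 0 < u by case: (u) odd_u.
have dvd_b : 2 ^ b.+1 %| u - 1 by apply: dvdn_trans dvd_u; rewrite dvdn_exp2l.
have : 2 ^ b.+1 %| q - 1.
  rewrite -(@Gauss_dvdr _ u) ?coprimeXl ?coprime2n // -(dvdn_addl _ dvd_b).
  have -> : u * (q - 1) + (u - 1) = u * q - 1 by nia.
  by apply: dvdn_trans dvd_uq; rewrite dvdn_exp2l.
by rewrite pfactor_dvdn ?subn_gt0 // ltnn.
Qed.

Lemma affine_fixpoint_pow2 a n w t :
  2 ^ a %| n -> t <= n -> 0 < w - 1 -> 2 ^ logn 2 (w - 1) %| t ->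
  exists x, w * x + (n - t) = x %[mod 2 ^ a].
Proof.
move=> dvd_n le_tn w1_gt0 dvd_t.
have [o co_2o def_w1] := pfactor_coprime (isT : prime 2) w1_gt0.
set d := logn 2 (w - 1) in dvd_t def_w1.
have co_o : coprime o (2 ^ a) by rewrite coprime_sym coprimeXl.
set e := totient (2 ^ a).
have e_gt0 : 0 < e by rewrite totient_gt0 expn_gt0.
exists (t %/ 2 ^ d * o ^ e.-1).
have -> : w * (t %/ 2 ^ d * o ^ e.-1) = t %/ 2 ^ d * o ^ e.-1 + t * o ^ e.
  have def_w : w = o * 2 ^ d + 1 by lia.
  have def_oe : o ^ e = o * o ^ e.-1 by rewrite -expnS prednK.
  rewrite def_oe -{3}(divnK dvd_t) def_w.
  by set X := t %/ 2 ^ d; set Y := o ^ e.-1; set D := 2 ^ d; nia.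
rewrite -addnA -modnDmr (_ : (t * o ^ e + (n - t)) %% 2 ^ a = 0) ?addn0 //.
rewrite -modnDml -modnMmr /e (Euler_exp_totient co_o) modnMmr muln1 modnDml subnKC //.
exact/eqP.
Qed.

Lemma nu2_bound_of_flip n q s' t (Z : pred nat) :
  0 < n -> 1 < q -> coprime q n -> coprime s' n -> t <= n -> q * t = t %[mod n] ->
  cyclotomic_closed n q Z -> (forall k, Z (s' * (k * (n - 1)) + (n - t)) = ~~ Z k) ->
  0 < logn 2 n < 2 * logn 2 (q - 1).
Proof.
move=> n_gt0 q_gt1 co_qn co_sn le_tn qt_t [Zmod Zq] flip.
set a := logn 2 n; set b := logn 2 (q - 1); set u := s' * (n - 1).
have dvd_n : 2 ^ a %| n by rewrite pfactor_dvdn.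
have odd_n : odd (n %/ 2 ^ a).
  have [m co_2m def_n] := pfactor_coprime (isT : prime 2) n_gt0.
  by rewrite {1}def_n mulnK ?expn_gt0 // -coprime2n.
have flip_w w : w = u \/ w = u * q ->
    coprime w n /\ forall k, Z (w * k + (n - t)) = ~~ Z k.
  have co_un : coprime u n by rewrite coprimeMl co_sn subn1 coprimePn.
  case=> ->; split; rewrite ?(coprimeMl n u q) ?co_un ?co_qn // => k.
    by rewrite -flip /u; congr (Z (_ + _)); nia.
  by rewrite -(Zq k) -flip /u; congr (Z (_ + _)); nia.
have no_fix w x : w = u \/ w = u * q -> ~ (w * x + (n - t) = x %[mod 2 ^ a]).
  move=> /flip_w [co_wn flip_wk] fix_x.
  exact: no_affine_flip dvd_n odd_n co_wn Zmod fix_x flip_wk.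
have [a0 | a_gt0] := posnP a; first by case: (no_fix u 0); [left | rewrite a0 !modn1].
rewrite /= ltnNge; apply/negP => le_2b_a.
have odd_u : odd u.
  have even_n : 2 %| n by apply: dvdn_trans dvd_n; rewrite -{1}(expn1 2) dvdn_exp2l.
  rewrite oddM -coprimen2 (coprime_dvdr even_n co_sn) subn1 /=.
  by move: n_gt0 even_n; rewrite dvdn2; case: (n) => //= m _; rewrite negbK.
have dvd_t : 2 ^ (a - b) %| t.
  have [-> | t_gt0] := posnP t; first exact: dvdn0.
  have q1_gt0 : 0 < q - 1 by rewrite subn_gt0.
  have : n %| (q - 1) * t by rewrite mulnBl mul1n -eqn_mod_dvd ?qt_t // leq_pmull // ltnW.
  move=> /(dvdn_trans dvd_n); rewrite !pfactor_dvdn ?muln_gt0 ?q1_gt0 //.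
  by rewrite lognM // leq_subLR.
have le_b : b <= a - b by lia.
have [w uw not_dvd] := pow2_not_dvd_choice odd_u q_gt1 le_b.
have w1_gt0 : 0 < w - 1 by rewrite lt0n; apply: contraNneq not_dvd => ->; exact: dvdn0.
have [|x fix_x] := affine_fixpoint_pow2 dvd_n le_tn w1_gt0; last exact: no_fix uw fix_x.
apply: dvdn_trans dvd_t; rewrite dvdn_exp2l //.
by move: not_dvd; rewrite pfactor_dvdn // -ltnNge ltnS.
Qed.

Lemma flip_bit_mod h k x :
  0 < h -> x = h %[mod 2 * h] -> (h <= (k + x) %% (2 * h)) = ~~ (h <= k %% (2 * h)).
Proof.
move=> h_gt0 def_x; rewrite -modnDmr def_x modnDmr -modnDml.
have : k %% (2 * h) < 2 * h by rewrite ltn_pmod // muln_gt0 h_gt0.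
move: (k %% _) => r lt_r; have [lt_rh | le_hr] := ltnP r h.
  by rewrite modn_small ?leq_addl -?ltnNge //; lia.
by rewrite (_ : r + h = r - h + 2 * h) ?modnDr ?modn_small; lia.
Qed.

Lemma flip_of_nu2_bound n q :
  1 < q -> 0 < logn 2 n < 2 * logn 2 (q - 1) ->
  exists t (Z : pred nat), [/\ t < n, q * t = t %[mod n], cyclotomic_closed n q Z &
    forall k, Z ((n - 1) * (k * (n - 1)) + (n - t)) = ~~ Z k].
Proof.
move=> q_gt1 /andP [a_gt0 a_lt]; have n_gt0 : 0 < n by case: (n) a_gt0; rewrite ?logn0.
have q1_gt0 : 0 < q - 1 by rewrite subn_gt0.
have [m co_2m def_n] := pfactor_coprime (isT : prime 2) n_gt0.
have [r co_2r def_q1] := pfactor_coprime (isT : prime 2) q1_gt0.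
move: a_gt0 a_lt def_n def_q1; set a := logn 2 n; set b := logn 2 (q - 1).
move=> a_gt0 a_lt def_n def_q1.
set c := a - b; set h := 2 ^ c; set e := a - c.
have h_gt0 : 0 < h by rewrite expn_gt0.
have def_2h : 2 ^ c.+1 = 2 * h by rewrite expnS.
have dvd_n : 2 * h %| n by rewrite -def_2h def_n dvdn_mull // dvdn_exp2l //; lia.
have dvd_q1 : 2 * h %| q - 1 by rewrite -def_2h def_q1 dvdn_mull // dvdn_exp2l //; lia.
have def_2a : 2 ^ a = h * 2 ^ e by rewrite -expnD subnKC //; lia.
have e_gt0 : 0 < e by lia.
exists (m * h), (fun k => h <= k %% (2 * h)); split.
- have m_gt0 : 0 < m by rewrite coprime2n in co_2m; case: (m) co_2m.
  by rewrite def_n def_2a mulnA ltn_Pmulr ?muln_gt0 ?m_gt0 // -{1}(expn0 2) ltn_exp2l.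
- apply/eqP; rewrite eqn_mod_dvd ?leq_pmull ?(ltnW q_gt1) // -{2}[m * h]mul1n -mulnBl.
  have le_a_bc : a <= b + c by lia.
  rewrite def_q1 def_n; apply: dvdn_trans (dvdn_mul (dvdnn m) (dvdn_exp2l 2 le_a_bc)) _.
  by apply/dvdnP; exists r; rewrite expnD !mulnA [r * _ * m]mulnAC.
- split=> k; first by rewrite modn_dvdm.
  rewrite -{1}[q](subnK (ltnW q_gt1)) mulnDl mul1n -modnDml.
  by rewrite (eqP (dvdn_mulr k dvd_q1)) add0n.
- move=> k; have neg_neg : (n - 1) * (k * (n - 1)) = k %[mod 2 * h].
    by rewrite mulnC -(modn_dvdm _ dvd_n) mul_pred_pred_mod // (modn_dvdm _ dvd_n).
  rewrite -modnDml neg_neg modnDml flip_bit_mod //.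
  have odd_rest : odd (m * (2 ^ e - 1)).
    by rewrite oddM -coprime2n co_2m oddB ?expn_gt0 // oddX /= -(prednK e_gt0).
  have -> : n - m * h = h * (m * (2 ^ e - 1)).
    by rewrite def_n def_2a mulnBr muln1 mulnBr mulnCA [m * h]mulnC.
  rewrite -(odd_double_half (m * (2 ^ e - 1))) odd_rest.
  by rewrite -muln2 mulnDr muln1 addnC [h * _]mulnC -mulnA modnMDl.
Qed.

Local Open Scope ring_scope.

Lemma prim_root_natr_neq0 (R : idomainType) n (z : R) :
  n.-primitive_root z -> n%:R != 0 :> R.
Proof.
move=> prim_z; have n_gt0 := prim_order_gt0 prim_z; apply/negP => n0.
have [p pcharRp] := natf0_pchar n_gt0 n0.
have /dvdnP [m def_n] : (p %| n)%N by rewrite (dvdn_pcharf pcharRp).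
have m_gt0 : (0 < m)%N by move: n_gt0; rewrite def_n; case: m {def_n}.
have : (z ^+ m - 1) ^+ p == 0.
  rewrite -(pFrobenius_autE pcharRp) rmorphB rmorph1 /= pFrobenius_autE -exprM.
  by rewrite -def_n prim_expr_order // subrr.
rewrite expf_eq0 subr_eq0 -(prim_order_dvd prim_z) => /andP [_ /(dvdn_leq m_gt0)].
by rewrite def_n leqNgt ltn_Pmulr ?prime_gt1 ?(pcharf_prime pcharRp).
Qed.

Lemma sum_prim_root_expM (R : idomainType) n (z : R) m :
  n.-primitive_root z -> \sum_(j < n) z ^+ (j * m) = if (n %| m)%N then n%:R else 0.
Proof.
move=> prim_z; rewrite (prim_order_dvd prim_z).
under eq_bigr do rewrite mulnC exprM.
have [-> | zm_neq1] := eqVneq (z ^+ m) 1.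
  by rewrite (eq_bigr (fun=> 1)) ?sumr_const ?card_ord // => i _; rewrite expr1n.
have : (z ^+ m - 1) * \sum_(j < n) (z ^+ m) ^+ j = 0.
  by rewrite -subrX1 -exprM mulnC exprM (prim_expr_order prim_z) expr1n subrr.
by move/eqP; rewrite mulf_eq0 subr_eq0 (negbTE zm_neq1) => /eqP.
Qed.

Section PnatFrobenius.
Variables (R : comNzRingType) (q : nat) (pcharRq : [pchar R].-nat q).

Definition pnatFrobenius of [pchar R].-nat q := fun x : R => x ^+ q.

Fact pnatFrobenius_is_nmod_morphism : nmod_morphism (pnatFrobenius pcharRq).
Proof.
split=> [|x y]; rewrite /pnatFrobenius; last exact: exprDn_pchar.
by rewrite expr0n; case: q pcharRq.
Qed.

Fact pnatFrobenius_is_monoid_morphism : monoid_morphism (pnatFrobenius pcharRq).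
Proof. by split=> [|x y]; rewrite /pnatFrobenius ?expr1n ?exprMn. Qed.

HB.instance Definition _ := GRing.isNmodMorphism.Build R R (pnatFrobenius pcharRq)
  pnatFrobenius_is_nmod_morphism.
HB.instance Definition _ := GRing.isMonoidMorphism.Build R R (pnatFrobenius pcharRq)
  pnatFrobenius_is_monoid_morphism.

End PnatFrobenius.

Section FiniteSubfield.
Variables (F : finFieldType) (L : fieldType) (iota : {rmorphism F -> L}).
Local Notation q := #|F|.

Lemma pnat_pchar_card : [pchar L].-nat q.
Proof.
have [p _ pcharFp] := finPcharP F.
have : p.-nat #|[set: F]| by exact/abelem_pgroup/fin_ring_pchar_abelem.
by rewrite cardsT (eq_pnat _ (pcharf_eq (rmorph_pchar iota pcharFp))).
Qed.

Lemma iota_expq a : iota a ^+ q = iota a.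
Proof. by rewrite -rmorphXn expf_card. Qed.

Lemma expq_fixed_in_image y : y ^+ q = y -> exists a, iota a = y.
Proof.
move=> fix_y; have /eqP := congr1 (fun P => (map_poly iota P).[y]) (finField_genPoly F).
rewrite /= rmorphB /= map_polyXn map_polyX !hornerE fix_y subrr eq_sym rmorph_prod horner_prod.
case/prodf_eq0 => a _ /=; rewrite map_polyXsubC hornerXsubC subr_eq0 => /eqP ->.
by exists a.
Qed.

Lemma map_poly_onto_expq_fixed (P : {poly L}) :
  (forall i, P`_i ^+ q = P`_i) -> exists P0, map_poly iota P0 = P.
Proof.
move=> fixP; exists (\poly_(i < size P) odflt 0 [pick a | iota a == P`_i]).
apply/polyP => i; rewrite coef_map coef_poly; case: ltnP => [_ | le_Pi].
  case: pickP => [a /eqP // | none].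
  by have [a def_a] := expq_fixed_in_image (fixP i); have := none a; rewrite def_a eqxx.
by rewrite raddf0 nth_default.
Qed.

End FiniteSubfield.

Lemma size_modpXn1 (R : fieldType) n (p : {poly R}) :
  (0 < n)%N -> (size (p %% ('X^n - 1))%R <= n)%N.
Proof.
move=> n_gt0; have size_Xn1 : size ('X^n - 1 : {poly R}) = n.+1 by rewrite -polyC1 size_XnsubC.
by rewrite -ltnS -size_Xn1 ltn_modp -size_poly_eq0 size_Xn1.
Qed.

Section ZeroSet.
Variables (F : finFieldType) (L : fieldType) (iota : {rmorphism F -> L}).
Variables (theta : L) (n : nat).
Hypothesis theta_prim : n.-primitive_root theta.
Local Notation q := #|F|.

Let n_gt0 : (0 < n)%N := prim_order_gt0 theta_prim.

Definition ev (c : {poly F}) (k : nat) : L := (map_poly iota c).[theta ^+ k].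

Lemma ev_mod c k1 k2 : (k1 = k2 %[mod n])%N -> ev c k1 = ev c k2.
Proof. by move=> eq_k; rewrite /ev -(prim_expr_mod theta_prim) eq_k prim_expr_mod. Qed.

Lemma ev_expq c k : ev c (q * k) = ev c k ^+ q.
Proof.
have frob_c : map_poly (pnatFrobenius (pnat_pchar_card iota)) (map_poly iota c) = map_poly iota c.
  by rewrite -map_poly_comp; apply: eq_map_poly => a; exact: iota_expq.
have -> : ev c k ^+ q = pnatFrobenius (pnat_pchar_card iota) (ev c k) by [].
by rewrite /ev -horner_map frob_c /= /pnatFrobenius -exprM mulnC.
Qed.

Lemma horner_modXn1 (P : {poly L}) k : (P %% ('X^n - 1)).[theta ^+ k] = P.[theta ^+ k].
Proof.
rewrite {2}(divp_eq P ('X^n - 1)) hornerD hornerM !hornerE -exprM mulnC exprM.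
by rewrite (prim_expr_order theta_prim) expr1n subrr mulr0 add0r.
Qed.

Lemma ev_modXn1 c k : ev (c %% ('X^n - 1)) k = ev c k.
Proof. by rewrite /ev map_modp rmorphB /= map_polyXn rmorph1 horner_modXn1. Qed.

Lemma ev_comp v nu m e k :
  iota nu = theta ^+ m -> ev (v \Po (nu *: 'X^e)) k = ev v (m + k * e).
Proof.
move=> def_nu; rewrite /ev map_comp_poly map_polyZ map_polyXn def_nu.
by rewrite horner_comp hornerZ hornerXn -exprM exprD.
Qed.

Lemma horner_phi_st s' t a j :
  (t <= n)%N -> (phi_st iota theta n s' t a).[theta ^+ j] = ev a (s' * j + (n - t))%N.
Proof.
move=> le_tn; have inv_t : (theta ^+ t)^-1 = theta ^+ (n - t).
  by apply: mulr1_eq; rewrite -exprD subnKC // prim_expr_order.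
rewrite /phi_st horner_modXn1 horner_comp hornerZ hornerXn inv_t -!exprM -exprD.
by rewrite addnC mulnC.
Qed.

Lemma eq_poly_on_thetaX (P Q : {poly L}) :
  (size P <= n)%N -> (size Q <= n)%N ->
  (forall j, (j < n)%N -> P.[theta ^+ j] = Q.[theta ^+ j]) -> P = Q.
Proof.
move=> P_size Q_size PQ; apply/eqP; rewrite -subr_eq0; apply/eqP.
apply: (@roots_geq_poly_eq0 _ _ [seq theta ^+ j | j : 'I_n]).
- by apply/allP => _ /mapP [j _ ->]; rewrite rootE hornerD hornerN PQ ?subrr.
- rewrite map_inj_uniq ?enum_uniq // => i j /eqP.
  by rewrite (eq_prim_root_expr theta_prim) !modn_small // => /eqP /val_inj.
- rewrite size_map -cardE card_ord (leq_trans (size_polyD _ _)) //.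
  by rewrite size_polyN geq_max P_size.
Qed.

Lemma ev_dot (v c : {poly F}) : (size v <= n)%N -> (size c <= n)%N ->
  n%:R * iota (\sum_(i < n) v`_i * c`_i) = \sum_(j < n) ev v (j * (n - 1))%N * ev c j.
Proof.
move=> v_size c_size.
have v_size' : (size (map_poly iota v) <= n)%N by rewrite size_map_poly.
have c_size' : (size (map_poly iota c) <= n)%N by rewrite size_map_poly.
rewrite (eq_bigr (fun j : 'I_n => \sum_(i < n) \sum_(l < n)
    (iota v`_i * iota c`_l) * theta ^+ (j * ((n - 1) * i + l)))) => [|j _]; last first.
  rewrite /ev (horner_coef_wide _ v_size') (horner_coef_wide _ c_size') mulr_suml.
  apply: eq_bigr => i _; rewrite mulr_sumr; apply: eq_bigr => l _.
  rewrite !coef_map /= mulnDr exprD -!exprM mulrACA mulnA [(j * _)%N]mulnC.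
  by congr (_ * (_ * _)).
rewrite exchange_big raddf_sum mulr_sumr; apply: eq_bigr => i _ /=.
rewrite exchange_big /= (bigD1 i) //= [X in _ + X]big1 => [|l ne_li].
  by rewrite -mulr_sumr (sum_prim_root_expM _ theta_prim) dvdn_predMD // eqxx rmorphM mulrC addr0.
by rewrite -mulr_sumr (sum_prim_root_expM _ theta_prim) dvdn_predMD // val_eqE (negbTE ne_li) mulr0.
Qed.

Definition zero_set (C : {poly F} -> Prop) : pred nat :=
  fun k => if excluded_middle_informative (forall c, C c -> ev c k = 0) then true else false.

Lemma zero_setP C k : reflect (forall c, C c -> ev c k = 0) (zero_set C k).
Proof. by rewrite /zero_set; case: excluded_middle_informative => Z; constructor. Qed.

Lemma zero_set_closed C : cyclotomic_closed n q (zero_set C).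
Proof.
split=> k; apply/zero_setP/zero_setP => Z c Cc.
- by rewrite (ev_mod c (modn_mod k n)) Z.
- by rewrite -(ev_mod c (modn_mod k n)) Z.
- by have /eqP := Z c Cc; rewrite ev_expq expf_eq0 => /andP [_ /eqP].
- by rewrite ev_expq Z // expr0n gtn_eqF // ltnW // finNzRing_gt1.
Qed.

Lemma ev_dual_mul C v c j : is_cyclic_code n C -> dual_code n C v -> C c ->
  ev v (j * (n - 1))%N * ev c j = 0.
Proof.
case=> _ _ _ C_shift [v_size v_dual] Cc.
pose W := \poly_(j < n) (ev v (j * (n - 1))%N * ev c j).
suff W0 : W = 0.
  have := congr1 (fun P : {poly L} => P`_(j %% n)) W0; rewrite /= coef_poly ltn_pmod // coef0.
  by rewrite (ev_mod c (modn_mod j n)) (ev_mod v (modnMml j (n - 1) n)).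
apply: eq_poly_on_thetaX; rewrite ?size_poly ?size_poly0 // => k lt_kn.
have dot0 : \sum_(j < n) ev v (j * (n - 1))%N * ev (('X^k * c) %% ('X^n - 1)) j = 0.
  rewrite -ev_dot ?size_modpXn1 // (v_dual _ (C_shift _ _ Cc)).
  by apply/eqP; rewrite mulf_eq0 fmorph_eq0 eqxx orbT.
rewrite horner0 horner_poly -[RHS]dot0.
apply: eq_bigr => i _; rewrite ev_modXn1 /ev rmorphM /= hornerM map_polyXn hornerXn.
by rewrite -!exprM -mulrA [(k * i)%N]mulnC [_ * theta ^+ _]mulrC.
Qed.

Lemma dual_codeE C v : is_cyclic_code n C ->
  dual_code n C v <->
  (size v <= n)%N /\ forall j, ~~ zero_set C j -> ev v (j * (n - 1))%N = 0.
Proof.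
move=> C_cyc; split=> [dual_v | [v_size v0]].
  split=> [|j /zero_setP notZ]; first by case: dual_v.
  apply/eqP/negP => /negP ev_neq0; apply: notZ => c Cc.
  by have /eqP := ev_dual_mul j C_cyc dual_v Cc; rewrite mulf_eq0 (negbTE ev_neq0) => /eqP.
split=> // c Cc; case: C_cyc => C_size _ _ _.
have := ev_dot v_size (C_size c Cc); rewrite [X in _ = X]big1 => [/eqP|j _]; last first.
  have [/zero_setP Zj | /v0 ->] := boolP (zero_set C j); last by rewrite mul0r.
  by rewrite Zj ?mulr0.
by rewrite mulf_eq0 (negbTE (prim_root_natr_neq0 theta_prim)) fmorph_eq0 => /eqP.
Qed.

Hypothesis coprime_qn : coprime q n.

Lemma frob_prod_cyclotomic (S : pred nat) : cyclotomic_closed n q S ->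
  let P := \prod_(k : 'I_n | S k) ('X - (theta ^+ k)%:P) in
  map_poly (pnatFrobenius (pnat_pchar_card iota)) P = P.
Proof.
case=> S_mod S_q /=; rewrite rmorph_prod.
pose mulq (k : 'I_n) : 'I_n := Ordinal (ltn_pmod (q * k) n_gt0).
have mulq_inj : injective mulq.
  move=> k1 k2 /(congr1 val) /(eq_modMl_coprime coprime_qn).
  by rewrite !modn_small // => /val_inj.
rewrite [RHS](reindex_inj mulq_inj); apply: eq_big => [k | k _] /=.
  by rewrite -S_mod S_q.
by rewrite map_polyXsubC /= (prim_expr_mod theta_prim) /pnatFrobenius -exprM mulnC.
Qed.

Lemma exists_poly_zero_set (S : pred nat) j : cyclotomic_closed n q S -> ~~ S j ->
  exists p : {poly F}, [/\ (size p <= n)%N, forall k, S k -> ev p k = 0 & ev p j != 0].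
Proof.
move=> S_cl notSj; set P := \prod_(k : 'I_n | S k) ('X - (theta ^+ k)%:P).
have [P0 def_P] : exists P0, map_poly iota P0 = P.
  apply: map_poly_onto_expq_fixed => i.
  by have := congr1 (fun Q : {poly L} => Q`_i) (frob_prod_cyclotomic S_cl); rewrite coef_map.
case: S_cl => S_mod _; pose j' := Ordinal (ltn_pmod j n_gt0).
have ev_P0 k : ev P0 k = \prod_(l : 'I_n | S l) (theta ^+ k - theta ^+ l).
  by rewrite /ev def_P horner_prod; apply: eq_bigr => l _; rewrite hornerXsubC.
exists P0; split.
- rewrite -(size_map_poly iota) def_P /P -big_filter size_prod_XsubC size_filter.
  have -> : count (fun k : 'I_n => S k) (index_enum 'I_n) = #|[pred k : 'I_n | S k]|.
    by rewrite cardE /enum_mem size_filter.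
  rewrite -[X in (_ < X)%N]card_ord -(cardC [pred k : 'I_n | S k]) -addn1 leq_add2l.
  by apply/card_gt0P; exists j'; rewrite !inE /= -S_mod.
- move=> k Sk; rewrite ev_P0 (bigD1 (Ordinal (ltn_pmod k n_gt0))) -?S_mod //=.
  by rewrite (prim_expr_mod theta_prim) subrr mul0r.
- rewrite ev_P0; apply/prodf_neq0 => l Sl; rewrite subr_eq0 (eq_prim_root_expr theta_prim).
  by apply: contraNneq notSj => eq_jl; rewrite S_mod eq_jl modn_small.
Qed.

Lemma zero_set_dual C : is_cyclic_code n C ->
  forall j, zero_set (dual_code n C) j = ~~ zero_set C (j * (n - 1))%N.
Proof.
move=> C_cyc j; have [Z_mod Z_q] := zero_set_closed C.
have neg_neg k : zero_set C (k * (n - 1) * (n - 1))%N = zero_set C k.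
  by rewrite Z_mod mul_pred_pred_mod // -Z_mod.
apply/zero_setP/idP => [dual0 | /negP notZ v /(dual_codeE v C_cyc) [_ v0]]; last first.
  by rewrite -(ev_mod v (mul_pred_pred_mod j n_gt0)) v0 ?neg_neg //; apply/negP.
apply/negP => Zj.
have S_cl : cyclotomic_closed n q (fun k => ~~ zero_set C (k * (n - 1))%N).
  split=> k; last by rewrite -mulnA Z_q.
  by rewrite Z_mod [in RHS]Z_mod modnMml.
have [p [p_size p0 /eqP pj]] := exists_poly_zero_set S_cl (introT negPn Zj).
apply: pj; apply: dual0; apply/(dual_codeE p C_cyc); split=> // k notZk.
by apply: p0; rewrite neg_neg.
Qed.

Lemma zero_set_flip_of_iso_dual C s' t :
  is_cyclic_code n C -> (t <= n)%N ->
  (forall b, (exists a, C a /\ phi_st iota theta n s' t a = b) <->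
             (exists a, dual_code n C a /\ map_poly iota a = b)) ->
  forall k, zero_set C (s' * (k * (n - 1)) + (n - t))%N = ~~ zero_set C k.
Proof.
move=> C_cyc le_tn iso k; have [Z_mod _] := zero_set_closed C.
rewrite [in RHS]Z_mod -(mul_pred_pred_mod k n_gt0) -Z_mod -zero_set_dual //.
apply/zero_setP/zero_setP => [Z v dual_v | Z c Cc].
  have [a [Ca phi_a]] : exists a, C a /\ phi_st iota theta n s' t a = map_poly iota v.
    by apply/iso; exists v.
  by rewrite /ev -phi_a horner_phi_st // Z.
have [v [dual_v phi_c]] : exists v, dual_code n C v /\ map_poly iota v = phi_st iota theta n s' t c.
  by apply/iso; exists c.
by rewrite -horner_phi_st // -phi_c; exact: Z.
Qed.

Definition code_of_zero_set (Z : pred nat) : {poly F} -> Prop :=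
  fun p => (size p <= n)%N /\ forall k, Z k -> ev p k = 0.

Lemma code_of_zero_set_cyclic Z : is_cyclic_code n (code_of_zero_set Z).
Proof.
split=> [p [] // | | p r [p_size p0] [r_size r0] | a p [_ p0]].
- by split=> [|k _]; rewrite ?size_poly0 // /ev raddf0 horner0.
- split=> [|k Zk]; first by rewrite (leq_trans (size_polyD _ _)) // geq_max p_size.
  by rewrite /ev raddfD hornerD -!/(ev _ _) p0 ?r0 ?addr0.
- split=> [|k Zk]; first exact: size_modpXn1.
  by rewrite ev_modXn1 /ev rmorphM hornerM -/(ev p k) p0 ?mulr0.
Qed.

Lemma zero_set_code_of_zero_set Z :
  cyclotomic_closed n q Z -> zero_set (code_of_zero_set Z) =1 Z.
Proof.
move=> Z_cl j; apply/zero_setP/idP => [Zc | Zj c [_ c0]]; last exact: c0.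
apply/negPn/negP => notZj; have [p [p_size p0 /eqP pj]] := exists_poly_zero_set Z_cl notZj.
by apply: pj; apply: Zc.
Qed.

Lemma thetaX_in_image m : (q * m = m %[mod n])%N -> exists mu, iota mu = theta ^+ m.
Proof.
move=> qm; apply: expq_fixed_in_image.
by rewrite -exprM mulnC -(prim_expr_mod theta_prim) qm prim_expr_mod.
Qed.

Section IsoDual.
Variables (Z : pred nat) (s s' t : nat).
Hypotheses (le_tn : (t <= n)%N) (qt_t : (q * t = t %[mod n])%N).
Hypotheses (ss' : (s * s' = 1 %[mod n])%N) (Z_cl : cyclotomic_closed n q Z).
Hypothesis Z_flip : forall k, Z (s' * (k * (n - 1)) + (n - t))%N = ~~ Z k.
Local Notation C := (code_of_zero_set Z).

Lemma phi_code_dual a : C a ->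
  exists2 v, dual_code n C v & map_poly iota v = phi_st iota theta n s' t a.
Proof.
move=> [_ a0]; have [mu def_mu] := thetaX_in_image qt_t.
set v := (a \Po (mu^-1 *: 'X^s')) %% ('X^n - 1).
have phi_a : map_poly iota v = phi_st iota theta n s' t a.
  rewrite map_modp map_comp_poly map_polyZ map_polyXn fmorphV def_mu.
  by rewrite rmorphB /= map_polyXn rmorph1.
exists v => //; apply/(dual_codeE _ (code_of_zero_set_cyclic Z)).
split=> [|j]; first exact: size_modpXn1.
rewrite zero_set_code_of_zero_set // -Z_flip => Zj.
by rewrite /ev phi_a horner_phi_st // a0.
Qed.

Lemma dual_phi_code v : dual_code n C v ->
  exists2 a, C a & phi_st iota theta n s' t a = map_poly iota v.
Proof.
case/(dual_codeE _ (code_of_zero_set_cyclic Z)) => v_size v0.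
have [nu def_nu] : exists nu, iota nu = theta ^+ (t * s).
  by apply: thetaX_in_image; rewrite mulnA -modnMml qt_t modnMml.
set a := (v \Po (nu *: 'X^s)) %% ('X^n - 1).
have ev_a k : ev a k = ev v ((t + k) * s) by rewrite ev_modXn1 (ev_comp _ _ _ def_nu) mulnDl.
exists a.
  split=> [|k Zk]; first exact: size_modpXn1.
  rewrite ev_a -(ev_mod v (mul_pred_pred_mod _ n_gt0)) v0 // zero_set_code_of_zero_set //.
  have back_k : (s' * ((t + k) * s * (n - 1) * (n - 1)) + (n - t) = k %[mod n])%N.
    by rewrite -modnDml -modnMmr mul_pred_pred_mod // modnMmr modnDml affine_mod_invl.
  apply/negP => Zj; move: (Z_flip ((t + k) * s * (n - 1))).
  by rewrite (proj1 Z_cl) back_k -(proj1 Z_cl) Zk Zj.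
apply: eq_poly_on_thetaX; rewrite ?size_modpXn1 ?size_map_poly // => j _.
by rewrite horner_phi_st // ev_a -/(ev v j); apply: ev_mod; exact: affine_mod_invr.
Qed.

Lemma code_of_zero_set_iso_dual b :
  (exists a, C a /\ phi_st iota theta n s' t a = b) <->
  (exists v, dual_code n C v /\ map_poly iota v = b).
Proof.
split=> [[a [Ca <-]] | [v [dual_v <-]]].
  by have [v dual_v phi_a] := phi_code_dual Ca; exists v.
by have [a Ca phi_a] := dual_phi_code dual_v; exists a.
Qed.

End IsoDual.

End ZeroSet.

Unset Implicit Arguments.
Set Strict Implicit.

Theorem theorem4p1 (F : finFieldType) (n : nat)
    (L : fieldType) (iota : {rmorphism F -> L}) (theta : L) :
  (0 < n)%N -> coprime #|F| n -> n.-primitive_root theta ->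
  (exists C : {poly F} -> Prop,
      is_cyclic_code n C /\ iso_self_dual iota #|F| theta n C) <->
  (0 < nu2 n /\ nu2 n < 2 * nu2 (#|F| - 1))%N.
Proof.
move=> n_gt0 co_qn theta_prim; have q_gt1 := finNzRing_gt1 F; rewrite /nu2; split.
  case=> C [C_cyc [s [t [s' [[_ _] [lt_tn /eqP qt_t] [_ /eqP ss'] iso]]]]].
  apply/andP; apply: (nu2_bound_of_flip n_gt0 q_gt1 co_qn (coprime_of_mul_mod1 ss')
                        (ltnW lt_tn) qt_t (zero_set_closed iota theta_prim C)).
  exact (zero_set_flip_of_iso_dual theta_prim co_qn C_cyc (ltnW lt_tn) iso).
move=> /andP bound; have [t [Z [lt_tn qt_t Z_cl Z_flip]]] := flip_of_nu2_bound q_gt1 bound.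
have n_gt1 : (1 < n)%N.
  have [a_gt0 _] := andP bound.
  by rewrite ltn_neqAle n_gt0 andbT; apply: contraTneq a_gt0 => <-; rewrite logn1.
have neg1_inv : ((n - 1) * (n - 1) = 1 %[mod n])%N.
  by rewrite -[X in (X * _)%N]mul1n mul_pred_pred_mod.
exists (code_of_zero_set iota theta n Z); split; first exact: code_of_zero_set_cyclic.
exists (n - 1)%N, t, (n - 1)%N; split.
- by split; [rewrite ltn_subrL n_gt0 | rewrite subn1 coprimePn].
- by split; last exact/eqP.
- by split; [rewrite subn_gt0 | exact/eqP].
- exact (code_of_zero_set_iso_dual iota theta_prim co_qn (ltnW lt_tn) qt_t neg1_inv Z_cl Z_flip).
Qed.
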